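(* Let $\mathcal C$ be a Markov category with conditionals and precise supports, and $f,g:X\to Y$ morphisms of $\mathcal C$. Then $J(f)\approx J(g)$ if and only if for every object $A$ and every state $\psi:I\to A\otimes X$ of $\mathcal C$, $(\mathrm{id}_A\otimes f)\psi=(\mathrm{id}_A\otimes g)\psi$. In particular, $J:\mathcal C\to\mathrm{Cond}(\mathcal C)$ is faithful whenever $I$ is a separator in $\mathcal C$.
   Context: A Markov category is a symmetric monoidal category $(\mathcal C,\otimes,I)$ (assumed strict) in which every object $X$ carries a commutative comonoid $\mathrm{copy}_X$, $\mathrm{del}_X$ compatible with $\otimes$, and $I$ is terminal. A morphism $f$ is deterministic if $\mathrm{copy}_Y f=(f\otimes f)\mathrm{copy}_X$. $\langle f,g\rangle=(f\otimes g)\mathrm{copy}_A$; marginals $f_X=(\mathrm{id}_X\otimes\mathrm{del}_Y)f$, $f_Y=(\mathrm{del}_X\otimes\mathrm{id}_Y)f$. A conditional of $f:A\to X\otimes Y$ w.r.t. $X$ is $f|_X:X\otimes A\to Y$ with $f=(\mathrm{id}_X\otimes f|_X)(\mathrm{copy}_X\otimes\mathrm{id}_A)(f_X\otimes\mathrm{id}_A)\mathrm{copy}_A$ (symmetrically w.r.t. $Y$); $\mathcal C$ has conditionals if these always exist. $f=_\mu g$ means $\langle\mathrm{id},f\rangle\mu=\langle\mathrm{id},g\rangle\mu$; $\mu\ll\nu$ means $f=_\nu g\Rightarrow f=_\mu g$ for all $f,g$. Precise supports: for deterministic $x:I\to X$, $y:I\to Y$, any $f:X\to Y$, $\mu:I\to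 X$: $x\otimes y\ll\langle\mathrm{id}_X,f\rangle\mu$ iff ($x\ll\mu$ and $y\ll fx$). $I$ is a separator if $f\phi=g\phi$ for all states $\phi:I\to X$ implies $f=g$. $\mathrm{Obs}(\mathcal C)$: same objects as $\mathcal C$; morphisms $X\leadsto Y$ are triples $(K,f,o)$, $f:X\to Y\otimes K$, $o:I\to K$ deterministic; identity $\mathrm{Id}_X=(I,\mathrm{id}_X,\mathrm{id}_I)$; composition $(K',f',o')\bullet(K,f,o)=(K'\otimes K,(f'\otimes\mathrm{id}_K)f,o'\otimes o)$; tensor of $(K,f,o):X\leadsto Y$, $(K',f',o'):X'\leadsto Y'$ is $(K'\otimes K,(\mathrm{id}_{Y'}\otimes\mathrm{swap}_{K',Y}\otimes\mathrm{id}_K)(f'\otimes f),o'\otimes o)$; $J(f)=(I,f,\mathrm{id}_I)$. For states $(K,\psi,o),(K',\psi',o'):I\leadsto X$, $(K,\psi,o)\sim(K',\psi',o')$ iff either ($o\ll\psi_K$, $o'\ll\psi'_{K'}$ and $\psi|_Ko=\psi'|_{K'}o'$, $\psi|_K:K\to X$ a conditional w.r.t. $K$) or ($o\not\ll\psi_K$ and $o'\not\ll\psi'_{K'}$). For $F,G:X\leadsto Y$, $F\approx G$ iff for every $A$ and every state $\Psi:I\leadsto A\otimes X$, $(\mathrm{Id}_A\otimes F)\bullet\Psi\sim(\mathrm{Id}_A\otimes G)\bullet\Psi$. $\mathrm{Cond}(\mathcal C)=\mathrm{Obs}(\mathcal C)/{\approx}$. *)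

Set Implicit Arguments.
Unset Strict Implicit.
Set Universe Polymorphism.

Record SymMonCat := {
  ob : Type;
  hom : ob -> ob -> Type;
  comp : forall {X Y Z : ob}, hom Y Z -> hom X Y -> hom X Z;
  idm : forall (X : ob), hom X X;
  tens : ob -> ob -> ob;
  unit : ob;
  tensm : forall {X Y X' Y' : ob}, hom X Y -> hom X' Y' -> hom (tens X X') (tens Y Y');
  assoc : forall (X Y Z : ob), hom (tens (tens X Y) Z) (tens X (tens Y Z));
  assoc_inv : forall (X Y Z : ob), hom (tens X (tens Y Z)) (tens (tens X Y) Z);
  lunit : forall (X : ob), hom (tens unit X) X;
  lunit_inv : forall (X : ob), hom X (tens unit X);
  runit : forall (X : ob), hom (tens X unit) X;
  runit_inv : forall (X : ob), hom X (tens X unit);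
  swap : forall (X Y : ob), hom (tens X Y) (tens Y X);

  comp_assoc : forall X Y Z W (f : hom X Y) (g : hom Y Z) (h : hom Z W),
      comp h (comp g f) = comp (comp h g) f;
  comp_id_l : forall X Y (f : hom X Y), comp (idm Y) f = f;
  comp_id_r : forall X Y (f : hom X Y), comp f (idm X) = f;
  tensm_id : forall X Y, tensm (idm X) (idm Y) = idm (tens X Y);
  tensm_comp : forall X Y Z X' Y' Z' (f : hom X Y) (g : hom Y Z)
      (f' : hom X' Y') (g' : hom Y' Z'),
      tensm (comp g f) (comp g' f') = comp (tensm g g') (tensm f f');
  assoc_iso1 : forall X Y Z, comp (assoc X Y Z) (assoc_inv X Y Z) = idm _;
  assoc_iso2 : forall X Y Z, comp (assoc_inv X Y Z) (assoc X Y Z) = idm _;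
  lunit_iso1 : forall X, comp (lunit X) (lunit_inv X) = idm _;
  lunit_iso2 : forall X, comp (lunit_inv X) (lunit X) = idm _;
  runit_iso1 : forall X, comp (runit X) (runit_inv X) = idm _;
  runit_iso2 : forall X, comp (runit_inv X) (runit X) = idm _;
  assoc_nat : forall X Y Z X' Y' Z' (f : hom X X') (g : hom Y Y') (h : hom Z Z'),
      comp (assoc X' Y' Z') (tensm (tensm f g) h)
      = comp (tensm f (tensm g h)) (assoc X Y Z);
  lunit_nat : forall X Y (f : hom X Y),
      comp (lunit Y) (tensm (idm unit) f) = comp f (lunit X);
  runit_nat : forall X Y (f : hom X Y),
      comp (runit Y) (tensm f (idm unit)) = comp f (runit X);
  pentagon : forall W X Y Z,
      comp (assoc W X (tens Y Z)) (assoc (tens W X) Y Z)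
      = comp (tensm (idm W) (assoc X Y Z))
          (comp (assoc W (tens X Y) Z) (tensm (assoc W X Y) (idm Z)));
  triangle : forall X Y,
      comp (tensm (idm X) (lunit Y)) (assoc X unit Y) = tensm (runit X) (idm Y);
  swap_nat : forall X Y X' Y' (f : hom X X') (g : hom Y Y'),
      comp (swap X' Y') (tensm f g) = comp (tensm g f) (swap X Y);
  swap_invol : forall X Y, comp (swap Y X) (swap X Y) = idm (tens X Y);
  hexagon : forall X Y Z,
      comp (assoc Y Z X) (comp (swap X (tens Y Z)) (assoc X Y Z))
      = comp (tensm (idm Y) (swap X Z))
          (comp (assoc Y X Z) (tensm (swap X Y) (idm Z)))
}.

Arguments ob s : clear implicits.
Arguments hom s _ _ : clear implicits.
Arguments comp {s X Y Z} _ _.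
Arguments idm {s} X.
Arguments tens {s} _ _.
Arguments unit {s}.
Arguments tensm {s X Y X' Y'} _ _.
Arguments assoc {s} X Y Z.
Arguments assoc_inv {s} X Y Z.
Arguments lunit {s} X.
Arguments lunit_inv {s} X.
Arguments runit {s} X.
Arguments runit_inv {s} X.
Arguments swap {s} X Y.

Declare Scope mc_scope.
Delimit Scope mc_scope with mc.
Open Scope mc_scope.
Notation "g ∘ f" := (comp g f) (at level 40, left associativity) : mc_scope.
Notation "X ⊗ Y" := (tens X Y) (at level 35, right associativity) : mc_scope.
Notation "f ⊗m g" := (tensm f g) (at level 35, right associativity) : mc_scope.

(** Middle-four interchange (A ⊗ B) ⊗ (C ⊗ D) -> (A ⊗ C) ⊗ (B ⊗ D),
    i.e. id_A ⊗ swap_{B,C} ⊗ id_D with the associators made explicit. *)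
Definition mid4 {S : SymMonCat} (A B C' D : ob S) :
    hom S ((A ⊗ B) ⊗ (C' ⊗ D)) ((A ⊗ C') ⊗ (B ⊗ D)) :=
  assoc_inv A C' (B ⊗ D)
  ∘ (idm A ⊗m assoc C' B D)
  ∘ (idm A ⊗m (swap B C' ⊗m idm D))
  ∘ (idm A ⊗m assoc_inv B C' D)
  ∘ assoc A B (C' ⊗ D).

Record MarkovCat := {
  smc :> SymMonCat;
  copy : forall (X : ob smc), hom smc X (X ⊗ X);
  del : forall (X : ob smc), hom smc X unit;
  copy_counit_l : forall X, lunit X ∘ (del X ⊗m idm X) ∘ copy X = idm X;
  copy_counit_r : forall X, runit X ∘ (idm X ⊗m del X) ∘ copy X = idm X;
  copy_coassoc : forall X,
      assoc X X X ∘ (copy X ⊗m idm X) ∘ copy X = (idm X ⊗m copy X) ∘ copy X;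
  copy_comm : forall X, swap X X ∘ copy X = copy X;
  copy_tens : forall X Y, copy (X ⊗ Y) = mid4 X X Y Y ∘ (copy X ⊗m copy Y);
  del_tens : forall X Y, del (X ⊗ Y) = lunit unit ∘ (del X ⊗m del Y);
  copy_unit : copy unit = runit_inv unit;
  del_unit : del unit = idm unit;
  unit_terminal : forall X (f : hom smc X unit), f = del X
}.

Arguments copy {m} X.
Arguments del {m} X.

Section Defs.
Context {C : MarkovCat}.

Definition deterministic {X Y : ob C} (f : hom C X Y) : Prop :=
  copy Y ∘ f = (f ⊗m f) ∘ copy X.

Definition pairing {A X Y : ob C} (f : hom C A X) (g : hom C A Y) : hom C A (X ⊗ Y) :=
  (f ⊗m g) ∘ copy A.

Definition marg1 {A X Y : ob C} (f : hom C A (X ⊗ Y)) : hom C A X :=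
  runit X ∘ (idm X ⊗m del Y) ∘ f.
Definition marg2 {A X Y : ob C} (f : hom C A (X ⊗ Y)) : hom C A Y :=
  lunit Y ∘ (del X ⊗m idm Y) ∘ f.

(** c : X ⊗ A -> Y is a conditional of f : A -> X ⊗ Y w.r.t. X *)
Definition is_cond1 {A X Y : ob C} (f : hom C A (X ⊗ Y)) (c : hom C (X ⊗ A) Y) : Prop :=
  f = (idm X ⊗m c) ∘ assoc X X A ∘ (copy X ⊗m idm A) ∘ (marg1 f ⊗m idm A) ∘ copy A.

(** c : Y ⊗ A -> X is a conditional of f : A -> X ⊗ Y w.r.t. Y
    (the symmetric version: a conditional of swap ∘ f w.r.t. its first factor) *)
Definition is_cond2 {A X Y : ob C} (f : hom C A (X ⊗ Y)) (c : hom C (Y ⊗ A) X) : Prop :=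
  is_cond1 (swap X Y ∘ f) c.

Definition has_conditionals : Prop :=
  forall (A X Y : ob C) (f : hom C A (X ⊗ Y)),
    (exists c, is_cond1 f c) /\ (exists c, is_cond2 f c).

Definition eq_as {X Y : ob C} (mu : hom C unit X) (f g : hom C X Y) : Prop :=
  pairing (idm X) f ∘ mu = pairing (idm X) g ∘ mu.

Definition abs_cont {X : ob C} (mu nu : hom C unit X) : Prop :=
  forall (Y : ob C) (f g : hom C X Y), eq_as nu f g -> eq_as mu f g.

Definition state_tens {X Y : ob C} (x : hom C unit X) (y : hom C unit Y)
  : hom C unit (X ⊗ Y) := (x ⊗m y) ∘ runit_inv unit.

Definition precise_supports : Prop :=
  forall (X Y : ob C) (x : hom C unit X) (y : hom C unit Y)
         (f : hom C X Y) (mu : hom C unit X),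
    deterministic x -> deterministic y ->
    (abs_cont (state_tens x y) (pairing (idm X) f ∘ mu)
     <-> (abs_cont x mu /\ abs_cont y (f ∘ x))).

Definition separator : Prop :=
  forall (X Y : ob C) (f g : hom C X Y),
    (forall phi : hom C unit X, f ∘ phi = g ∘ phi) -> f = g.

Record ObsHom (X Y : ob C) := mkObs {
  obs_K : ob C;
  obs_f : hom C X (Y ⊗ obs_K);
  obs_o : hom C unit obs_K
}.

(** morphisms of Obs(C) require the observation o to be deterministic *)
Definition obs_valid {X Y : ob C} (F : ObsHom X Y) : Prop :=
  deterministic (obs_o F).

Definition obs_id (X : ob C) : ObsHom X X :=
  @mkObs X X unit (runit_inv X) (idm unit).

(** (K', f', o') • (K, f, o) = (K' ⊗ K, (f' ⊗ id_K) f, o' ⊗ o) *)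
Definition obs_comp {X Y Z : ob C} (F' : ObsHom Y Z) (F : ObsHom X Y) : ObsHom X Z :=
  @mkObs X Z (obs_K F' ⊗ obs_K F)
    (assoc Z (obs_K F') (obs_K F) ∘ (obs_f F' ⊗m idm (obs_K F)) ∘ obs_f F)
    (state_tens (obs_o F') (obs_o F)).

(** tensor of F' : X' ~> Y' and F : X ~> Y, a morphism X' ⊗ X ~> Y' ⊗ Y:
    (K' ⊗ K, (id_{Y'} ⊗ swap_{K',Y} ⊗ id_K)(f' ⊗ f), o' ⊗ o) *)
Definition obs_tens {X' Y' X Y : ob C} (F' : ObsHom X' Y') (F : ObsHom X Y)
  : ObsHom (X' ⊗ X) (Y' ⊗ Y) :=
  @mkObs (X' ⊗ X) (Y' ⊗ Y) (obs_K F' ⊗ obs_K F)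
    (mid4 Y' (obs_K F') Y (obs_K F) ∘ (obs_f F' ⊗m obs_f F))
    (state_tens (obs_o F') (obs_o F)).

Definition Jf {X Y : ob C} (f : hom C X Y) : ObsHom X Y :=
  @mkObs X Y unit (runit_inv Y ∘ f) (idm unit).

(** psi|_K o, for a conditional c of psi : I -> X ⊗ K w.r.t. K *)
Definition cond_at {X K : ob C} (c : hom C (K ⊗ unit) X) (o : hom C unit K)
  : hom C unit X := c ∘ runit_inv K ∘ o.

Definition obs_sim {X : ob C} (P P' : ObsHom unit X) : Prop :=
  (abs_cont (obs_o P) (marg2 (obs_f P)) /\
   abs_cont (obs_o P') (marg2 (obs_f P')) /\
   exists (c : hom C (obs_K P ⊗ unit) X) (c' : hom C (obs_K P' ⊗ unit) X),
     is_cond2 (obs_f P) c /\ is_cond2 (obs_f P') c' /\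
     cond_at c (obs_o P) = cond_at c' (obs_o P'))
  \/
  (~ abs_cont (obs_o P) (marg2 (obs_f P)) /\
   ~ abs_cont (obs_o P') (marg2 (obs_f P'))).

Definition obs_approx {X Y : ob C} (F G : ObsHom X Y) : Prop :=
  forall (A : ob C) (Psi : ObsHom unit (A ⊗ X)), obs_valid Psi ->
    obs_sim (obs_comp (obs_tens (obs_id A) F) Psi)
            (obs_comp (obs_tens (obs_id A) G) Psi).

End Defs.

(* For Ψ = J ψ the observation object of (Id_A ⊗ J f) • Ψ is a tensor power of I, on which
   all states agree: absolute continuity is automatic and a conditional evaluated at the
   observation recovers the whole state.  So J f ≈ J g forces (id_A ⊗ f) ψ = (id_A ⊗ g) ψ,
   up to split monomorphisms built from coherence isomorphisms.  Conversely, if f and g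
   agree after whiskering every state, they agree after whiskering every
   ψ : I -> (A ⊗ X) ⊗ K (move K to the left with a symmetry), so both composites are the
   same triple and ~ holds by reflexivity. *)
From Stdlib Require Import Classical.

Section SymmetricMonoidal.
Context {S : SymMonCat}.

Definition split_mono {X Y : ob S} (q : hom S X Y) : Prop :=
  exists r : hom S Y X, r ∘ q = idm X.

Lemma split_mono_cancel {X Y Z : ob S} (q : hom S X Y) (u v : hom S Z X) :
  split_mono q -> q ∘ u = q ∘ v -> u = v.
Proof.
  intros [r Hr] E.
  rewrite <- (comp_id_l u), <- (comp_id_l v), <- Hr, <- !comp_assoc, E.
  reflexivity.
Qed.

Lemma split_mono_comp {X Y Z : ob S} (q1 : hom S X Y) (q2 : hom S Y Z) :
  split_mono q1 -> split_mono q2 -> split_mono (q2 ∘ q1).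
Proof.
  intros [r1 H1] [r2 H2]. exists (r1 ∘ r2).
  rewrite comp_assoc, <- (comp_assoc q2 r2 r1), H2, comp_id_r. exact H1.
Qed.

Lemma split_mono_tensm {X Y X' Y' : ob S} (q1 : hom S X Y) (q2 : hom S X' Y') :
  split_mono q1 -> split_mono q2 -> split_mono (q1 ⊗m q2).
Proof.
  intros [r1 H1] [r2 H2]. exists (r1 ⊗m r2).
  rewrite <- tensm_comp, H1, H2. apply tensm_id.
Qed.

Lemma split_mono_id (X : ob S) : split_mono (idm X).
Proof. exists (idm X). apply comp_id_l. Qed.

Lemma split_mono_assoc (X Y Z : ob S) : split_mono (assoc X Y Z).
Proof. exists (assoc_inv X Y Z). apply assoc_iso2. Qed.

Lemma split_mono_assoc_inv (X Y Z : ob S) : split_mono (assoc_inv X Y Z).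
Proof. exists (assoc X Y Z). apply assoc_iso1. Qed.

Lemma split_mono_lunit (X : ob S) : split_mono (lunit X).
Proof. exists (lunit_inv X). apply lunit_iso2. Qed.

Lemma split_mono_lunit_inv (X : ob S) : split_mono (lunit_inv X).
Proof. exists (lunit X). apply lunit_iso1. Qed.

Lemma split_mono_runit (X : ob S) : split_mono (runit X).
Proof. exists (runit_inv X). apply runit_iso2. Qed.

Lemma split_mono_runit_inv (X : ob S) : split_mono (runit_inv X).
Proof. exists (runit X). apply runit_iso1. Qed.

Lemma split_mono_swap (X Y : ob S) : split_mono (swap X Y).
Proof. exists (swap Y X). apply swap_invol. Qed.

Lemma split_mono_mid4 (A B C D : ob S) : split_mono (mid4 A B C D).
Proof.
  unfold mid4.
  repeat apply split_mono_comp; repeat apply split_mono_tensm;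
    first [ apply split_mono_id | apply split_mono_assoc
          | apply split_mono_assoc_inv | apply split_mono_swap ].
Qed.

Lemma lunit_inv_nat {X Y : ob S} (u : hom S X Y) :
  (idm unit ⊗m u) ∘ lunit_inv X = lunit_inv Y ∘ u.
Proof.
  apply (split_mono_cancel (lunit Y)); [apply split_mono_lunit |].
  rewrite comp_assoc, lunit_nat, <- comp_assoc, lunit_iso1, comp_id_r.
  rewrite comp_assoc, lunit_iso1, comp_id_l. reflexivity.
Qed.

Lemma runit_inv_nat {X Y : ob S} (u : hom S X Y) :
  (u ⊗m idm unit) ∘ runit_inv X = runit_inv Y ∘ u.
Proof.
  apply (split_mono_cancel (runit Y)); [apply split_mono_runit |].
  rewrite comp_assoc, runit_nat, <- comp_assoc, runit_iso1, comp_id_r.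
  rewrite comp_assoc, runit_iso1, comp_id_l. reflexivity.
Qed.

Lemma whisker_right_as_whisker_left {A X Y K : ob S} (u : hom S X Y) :
  (idm A ⊗m u) ⊗m idm K
  = swap K (A ⊗ Y) ∘ assoc K A Y ∘ (idm (K ⊗ A) ⊗m u)
      ∘ assoc_inv K A X ∘ swap (A ⊗ X) K.
Proof.
  rewrite <- (tensm_id K A), <- (comp_assoc _ (assoc K A Y) (swap K (A ⊗ Y))), assoc_nat.
  rewrite <- !comp_assoc, (comp_assoc (swap (A ⊗ X) K) (assoc_inv K A X)), assoc_iso1.
  rewrite comp_id_l, comp_assoc, swap_nat, <- comp_assoc, swap_invol, comp_id_r. reflexivity.
Qed.

Lemma whisker_right_eq_of_whisker_left {W X Y : ob S} (f g : hom S X Y) :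
  (forall A (psi : hom S W (A ⊗ X)), (idm A ⊗m f) ∘ psi = (idm A ⊗m g) ∘ psi) ->
  forall A K (psi : hom S W ((A ⊗ X) ⊗ K)),
    ((idm A ⊗m f) ⊗m idm K) ∘ psi = ((idm A ⊗m g) ⊗m idm K) ∘ psi.
Proof.
  intros Hfg A K psi.
  rewrite !whisker_right_as_whisker_left, <- !comp_assoc, Hfg. reflexivity.
Qed.

End SymmetricMonoidal.

Section TrivialObjects.
Context {C : MarkovCat}.

(* Together with terminality of I this says K ≅ I. *)
Definition trivial_ob (K : ob C) : Prop := split_mono (del K).

Lemma trivial_ob_hom_eq {K Z : ob C} (s t : hom C Z K) : trivial_ob K -> s = t.
Proof.
  intros HK. apply (split_mono_cancel (del K) s t HK).
  rewrite (unit_terminal (del K ∘ s)), (unit_terminal (del K ∘ t)). reflexivity.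
Qed.

Lemma trivial_ob_unit : trivial_ob (@unit C).
Proof. unfold trivial_ob. rewrite del_unit. apply split_mono_id. Qed.

Lemma trivial_ob_tens {K1 K2 : ob C} :
  trivial_ob K1 -> trivial_ob K2 -> trivial_ob (K1 ⊗ K2).
Proof.
  intros H1 H2. unfold trivial_ob. rewrite del_tens.
  apply split_mono_comp; [apply split_mono_tensm; assumption | apply split_mono_lunit].
Qed.

Lemma abs_cont_trivial_ob {K : ob C} (mu nu : hom C unit K) :
  trivial_ob K -> abs_cont mu nu.
Proof. intros HK. rewrite (trivial_ob_hom_eq mu nu HK). intros Z u v E. exact E. Qed.

Lemma is_cond2_trivial_ob {X K : ob C} (h : hom C unit (X ⊗ K))
    (c : hom C (K ⊗ unit) X) (o : hom C unit K) :
  trivial_ob K -> is_cond2 h c -> swap X K ∘ h = state_tens o (cond_at c o).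
Proof.
  intros HK Hc. unfold is_cond2, is_cond1 in Hc. rewrite Hc, <- !comp_assoc.
  match goal with |- _ ∘ ?R = _ =>
    rewrite (trivial_ob_hom_eq R ((o ⊗m (runit_inv K ∘ o)) ∘ runit_inv unit)
               (trivial_ob_tens HK (trivial_ob_tens HK trivial_ob_unit))) end.
  unfold state_tens, cond_at.
  rewrite comp_assoc, <- tensm_comp, comp_id_l, comp_assoc. reflexivity.
Qed.

Lemma obs_sim_trivial_ob {X K : ob C} (h h' : hom C unit (X ⊗ K)) (o o' : hom C unit K) :
  trivial_ob K -> obs_sim (mkObs h o) (mkObs h' o') -> h = h'.
Proof.
  intros HK [[_ [_ [c [c' [Hc [Hc' E]]]]]] | [Hnot _]].
  - apply (split_mono_cancel (swap X K)); [apply split_mono_swap |].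
    simpl in Hc, Hc', E.
    rewrite (is_cond2_trivial_ob _ _ o HK Hc), (is_cond2_trivial_ob _ _ o' HK Hc'), E.
    rewrite (trivial_ob_hom_eq o o' HK). reflexivity.
  - exfalso. apply Hnot, abs_cont_trivial_ob, HK.
Qed.

Lemma obs_sim_refl {X : ob C} (P : ObsHom unit X) : @has_conditionals C -> obs_sim P P.
Proof.
  intros Hcond. unfold obs_sim.
  destruct (classic (abs_cont (obs_o P) (marg2 (obs_f P)))) as [H | H].
  - left. destruct (Hcond _ _ _ (obs_f P)) as [_ [c Hc]].
    split; [exact H |]. split; [exact H |]. exists c, c. auto.
  - right. auto.
Qed.

End TrivialObjects.

Section WhiskeredJ.
Context {C : MarkovCat}.

Definition unit_padding (A Y K : ob C) :
    hom C ((A ⊗ Y) ⊗ K) ((A ⊗ Y) ⊗ ((unit ⊗ unit) ⊗ K)) :=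
  assoc (A ⊗ Y) (unit ⊗ unit) K
  ∘ ((mid4 A unit Y unit ∘ (runit_inv A ⊗m runit_inv Y)) ⊗m idm K).

Lemma split_mono_unit_padding (A Y K : ob C) : split_mono (unit_padding A Y K).
Proof.
  unfold unit_padding.
  repeat first [ apply split_mono_mid4 | apply split_mono_runit_inv | apply split_mono_id
               | apply split_mono_assoc | apply split_mono_comp | apply split_mono_tensm ].
Qed.

Lemma obs_f_whisker_Jf {Z A X Y K : ob C} (f : hom C X Y)
    (psi : hom C Z ((A ⊗ X) ⊗ K)) (o : hom C unit K) :
  obs_f (obs_comp (obs_tens (obs_id A) (Jf f)) (mkObs psi o))
  = unit_padding A Y K ∘ (((idm A ⊗m f) ⊗m idm K) ∘ psi).
Proof.
  simpl. unfold unit_padding.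
  rewrite <- !comp_assoc. f_equal.
  rewrite comp_assoc. f_equal.
  rewrite <- tensm_comp, comp_id_l, <- comp_assoc, <- tensm_comp, comp_id_r.
  reflexivity.
Qed.

Definition state_obs {A : ob C} (psi : hom C unit A) : ObsHom unit A :=
  mkObs (runit_inv A ∘ psi) (idm unit).

Lemma obs_valid_state_obs {A : ob C} (psi : hom C unit A) : obs_valid (state_obs psi).
Proof.
  unfold obs_valid, deterministic. simpl.
  rewrite comp_id_r, tensm_id, comp_id_l. reflexivity.
Qed.

Lemma whisker_eq_of_Jf_approx {X Y : ob C} (f g : hom C X Y) :
  obs_approx (Jf f) (Jf g) ->
  forall A (psi : hom C unit (A ⊗ X)), (idm A ⊗m f) ∘ psi = (idm A ⊗m g) ∘ psi.
Proof.
  intros Happ A psi.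
  pose proof (Happ A (state_obs psi) (obs_valid_state_obs psi)) as Hsim.
  unfold state_obs in Hsim.
  apply (obs_sim_trivial_ob (obs_f (obs_comp (obs_tens (obs_id A) (Jf f)) _))
                            (obs_f (obs_comp (obs_tens (obs_id A) (Jf g)) _)) _ _) in Hsim;
    [| apply trivial_ob_tens; [apply trivial_ob_tens |]; apply trivial_ob_unit].
  rewrite !obs_f_whisker_Jf in Hsim.
  apply split_mono_cancel in Hsim; [| apply split_mono_unit_padding].
  rewrite !comp_assoc, !runit_inv_nat, <- !comp_assoc in Hsim.
  exact (split_mono_cancel _ _ _ (split_mono_runit_inv _) Hsim).
Qed.

Lemma Jf_approx_of_whisker_eq {X Y : ob C} (f g : hom C X Y) :
  @has_conditionals C ->
  (forall A (psi : hom C unit (A ⊗ X)), (idm A ⊗m f) ∘ psi = (idm A ⊗m g) ∘ psi) ->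
  obs_approx (Jf f) (Jf g).
Proof.
  intros Hcond Hfg A [K psi o] _.
  change (obs_sim
    (mkObs (obs_f (obs_comp (obs_tens (obs_id A) (Jf f)) (mkObs psi o)))
           (state_tens (state_tens (idm unit) (idm unit)) o))
    (mkObs (obs_f (obs_comp (obs_tens (obs_id A) (Jf g)) (mkObs psi o)))
           (state_tens (state_tens (idm unit) (idm unit)) o))).
  rewrite !obs_f_whisker_Jf, (whisker_right_eq_of_whisker_left f g Hfg).
  apply obs_sim_refl, Hcond.
Qed.

Lemma comp_states_eq_of_whisker_eq {X Y : ob C} (f g : hom C X Y) :
  (forall A (psi : hom C unit (A ⊗ X)), (idm A ⊗m f) ∘ psi = (idm A ⊗m g) ∘ psi) ->
  forall phi : hom C unit X, f ∘ phi = g ∘ phi.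
Proof.
  intros Hfg phi.
  apply (split_mono_cancel (lunit_inv Y)); [apply split_mono_lunit_inv |].
  rewrite !comp_assoc, <- !lunit_inv_nat, <- !comp_assoc. apply Hfg.
Qed.

End WhiskeredJ.

Theorem proposition5p11 (C : MarkovCat) :
  @has_conditionals C -> @precise_supports C ->
  (forall (X Y : ob C) (f g : hom C X Y),
      obs_approx (Jf f) (Jf g)
      <-> (forall (A : ob C) (psi : hom C unit (A ⊗ X)),
             (idm A ⊗m f) ∘ psi = (idm A ⊗m g) ∘ psi))
  /\
  (@separator C ->
   forall (X Y : ob C) (f g : hom C X Y), obs_approx (Jf f) (Jf g) -> f = g).
Proof.
  intros Hcond _. split.
  - intros X Y f g. split.
    + apply whisker_eq_of_Jf_approx.
    + apply Jf_approx_of_whisker_eq, Hcond.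
  - intros Hsep X Y f g Happ. apply Hsep.
    apply comp_states_eq_of_whisker_eq, whisker_eq_of_Jf_approx, Happ.
Qed.
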